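(* Let $C$ be a binary $[n,k]$ code with $C^\perp\neq\{\bm 0\}$ and $3<d(C^\perp)<k+1$. Then $\gamma(C)\le k-d(C^\perp)+2$.
   Context: An $[n,k]$ code over $\mathbb{F}_q$ is a $k$-dimensional subspace $C\subseteq\mathbb{F}_q^n$; binary means $q=2$; write $E=\{1,\dots,n\}$. For $\bm{x}\in\mathbb{F}_q^n$, $\mathrm{supp}(\bm{x})=\{i: x_i\neq 0\}$ and the weight is $|\mathrm{supp}(\bm{x})|$; for $B\subseteq\mathbb{F}_q^n$, $\mathrm{Supp}(B)=\bigcup_{\bm{x}\in B}\mathrm{supp}(\bm{x})$. $C^\perp$ is the dual code with respect to the standard inner product and $d(C^\perp)$ is the minimum weight of a nonzero codeword of $C^\perp$. The covering dimension is $\gamma(C)=\infty$ if $\mathrm{Supp}(C)\neq E$, and otherwise $\gamma(C)$ is the least positive integer $r$ such that $C$ has an $r$-dimensional subspace $D$ with $\mathrm{Supp}(D)=E$. *)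

(* Binary codes are represented as row spaces of matrices
   over 'F_2 (mxalgebra): a code C of length n is the row space of
   C : 'M['F_2]_n; its dimension is \rank C. *)
From HB Require Import structures.
From mathcomp Require Import all_boot all_order all_algebra all_fingroup all_field.
Set Implicit Arguments. Unset Strict Implicit. Unset Printing Implicit Defensive.
Import GRing.Theory.
Local Open Scope ring_scope.

Definition supp {n : nat} (x : 'rV['F_2]_n) : {set 'I_n} :=
  [set i | x 0 i != 0].

Definition wt {n : nat} (x : 'rV['F_2]_n) : nat := #|supp x|.

Definition Supp {m n : nat} (B : 'M['F_2]_(m, n)) : {set 'I_n} :=
  [set i | [exists x : 'rV['F_2]_n, (x <= B)%MS && (x 0 i != 0)]].

Definition dual {n : nat} (C : 'M['F_2]_n) : 'M['F_2]_n := kermx C^T.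

(* minimum weight of a nonzero codeword of the row space of C
   (meaningful when the code is nonzero; default value n otherwise) *)
Definition min_wt {n : nat} (C : 'M['F_2]_n) : nat :=
  (\big[minn/n]_(x : 'rV['F_2]_n | (x <= C)%MS && (x != 0%R)) wt x)%N.

(* covering dimension: None encodes infinity *)
Definition covering_dim {n : nat} (C : 'M['F_2]_n) : option nat :=
  if Supp C != setT then None
  else Some (\big[minn/n]_(r < n.+1 |
          (0 < (r : nat))%N &&
          [exists D : 'M['F_2]_n,
             [&& (D <= C)%MS, \rank D == r & Supp D == setT]]) (r : nat))%N.

(* Let z be a minimum-weight word of the dual code, d = wt z, T = supp z,
   t in T, c outside T and P = (T minus t) plus c.  Fix b != c in P.  The words
   x supported on P with x_b = x_c and wt x = d * x_c (mod 2) form a space W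
   of dimension at least d - 2 whose words have weight 0 or between 2 and
   d - 2, or else support P, in which case x + z has weight 2.  As d > 3, no
   vector at distance at most 1 from a nonzero word of W lies in the dual
   code, and the dual code has no word of weight 1.  Hence W + dual C is
   direct and contains no unit vector, so its dual D is a subcode of C of
   dimension k - dim W <= k - d + 2, and D has full support because a
   coordinate outside Supp D would put a unit vector in dual D = W + dual C. *)

From HB Require Import structures.
From mathcomp Require Import all_boot all_order all_algebra all_fingroup all_field.
From mathcomp Require Import zify.
Set Implicit Arguments. Unset Strict Implicit. Unset Printing Implicit Defensive.
Import GRing.Theory.
Local Open Scope ring_scope.

Lemma F2_cases (a : 'F_2) : a = 0 \/ a = 1.
Proof. by case: a => -[|[|]] //= Ha; [left|right]; apply/val_inj. Qed.

Lemma F2_neq0 (a : 'F_2) : (a != 0) = (a == 1).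
Proof. by case: (F2_cases a) => ->; rewrite ?eqxx ?oner_eq0. Qed.

Lemma F2_nat_eq0 (m : nat) : (m%:R == 0 :> 'F_2) = ~~ odd m.
Proof.
rewrite -(Fp_nat_mod (isT : prime 2)) modn2.
by case: (odd m); rewrite ?oner_eq0 ?eqxx.
Qed.

Lemma F2_oppr (a : 'F_2) : - a = a.
Proof. exact: oppr_pchar2 (pchar_Fp (isT : prime 2)) a. Qed.

Lemma oppmx_F2 m n (A : 'M['F_2]_(m, n)) : - A = A.
Proof. by apply/matrixP => i j; rewrite mxE F2_oppr. Qed.

Lemma addmx_eq0_F2 m n (A B : 'M['F_2]_(m, n)) : (A + B == 0) = (A == B).
Proof. by rewrite addr_eq0 oppmx_F2. Qed.

Section Weight.
Variable n : nat.
Implicit Types (x y : 'rV['F_2]_n) (i : 'I_n).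

Lemma in_supp x i : (i \in supp x) = (x 0 i != 0).
Proof. by rewrite inE. Qed.

Lemma in_supp_add x y i :
  (i \in supp (x + y)) = (i \in supp x) (+) (i \in supp y).
Proof.
rewrite !in_supp mxE.
by case: (F2_cases (x 0 i)) => ->; case: (F2_cases (y 0 i)) => ->.
Qed.

Lemma wt_add x y : (wt (x + y) <= wt x + wt y)%N.
Proof.
rewrite /wt; apply: leq_trans (leq_card_setU _ _); apply: subset_leq_card.
by apply/subsetP => i; rewrite in_supp_add in_setU; case: (i \in supp x); case: (i \in supp y).
Qed.

Lemma wt_eq0 x : (wt x == 0%N) = (x == 0).
Proof.
apply/idP/eqP => [/eqP/cards0_eq supp0|->]; last first.
  by rewrite /wt cards_eq0; apply/eqP/setP => i; rewrite in_supp mxE eqxx inE.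
apply/rowP => i; rewrite mxE; apply/eqP; apply: contraT; rewrite -in_supp supp0 inE; apply.
Qed.

Lemma wt0 : wt (0 : 'rV['F_2]_n) = 0%N.
Proof. by apply/eqP; rewrite wt_eq0. Qed.

Lemma wt_delta i : wt (delta_mx 0 i : 'rV['F_2]_n) = 1%N.
Proof.
rewrite /wt (_ : supp _ = [set i]) ?cards1 //.
by apply/setP => j; rewrite in_supp inE mxE eqxx /= eq_sym; case: (j == i); rewrite ?oner_eq0.
Qed.

Lemma sum_F2 x : \sum_i x 0 i = (wt x)%:R.
Proof.
rewrite (bigID (fun i => x 0 i != 0)) /= [X in _ + X]big1 => [|i /negbNE /eqP //].
rewrite addr0 (eq_bigr (fun _ => 1)) => [|i]; last by rewrite F2_neq0 => /eqP.
by rewrite sumr_const /wt /supp cardsE.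
Qed.

Lemma sum_mul_delta x j : \sum_i x 0 i * (i == j)%:R = x 0 j.
Proof. by rewrite (bigD1 j) //= eqxx mulr1 big1 ?addr0 // => i /negbTE ->; rewrite mulr0. Qed.

End Weight.

(* Lets [bigD1] split the minima over [minn] in [min_wt] and [covering_dim]. *)
HB.instance Definition _ := SemiGroup.isComLaw.Build nat minn minnA minnC.

Section Codes.
Variable n : nat.
Implicit Types (A B D : 'M['F_2]_n) (x : 'rV['F_2]_n).

Lemma min_wt_le B x : (x <= B)%MS -> x != 0 -> (min_wt B <= wt x)%N.
Proof. by move=> xB x0; rewrite /min_wt (bigD1 x) ?xB ?x0 //= geq_minl. Qed.

Lemma min_wt_attained B :
  B != 0 -> exists2 z, (z <= B)%MS /\ z != 0 & wt z = min_wt B.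
Proof.
case/rowV0Pn => x xB x0.
have x_nz : (x <= B)%MS && (x != 0) by rewrite xB.
have [z /andP [zB z0] zmin] :=
  @arg_minnP _ x (fun y => (y <= B)%MS && (y != 0)) (@wt n) x_nz.
exists z => //; apply/eqP; rewrite eqn_leq min_wt_le // andbT /min_wt.
apply: (big_ind (fun m => wt z <= m)%N) => [|a b za zb|y /zmin //].
  by rewrite /wt (leq_trans (max_card _)) ?card_ord.
by rewrite leq_min za.
Qed.

Lemma SuppS A B : (A <= B)%MS -> Supp A \subset Supp B.
Proof.
move=> AB; apply/subsetP => i; rewrite !inE => /existsP [x /andP [xA xi]].
by apply/existsP; exists x; rewrite (submx_trans xA AB).
Qed.

Lemma Supp0 : Supp (0 : 'M['F_2]_n) = set0.
Proof.
apply/setP => i; rewrite !inE; apply/negbTE; rewrite negb_exists.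
by apply/forallP => x; rewrite submx0 negb_and negbK; case: eqP => // ->; rewrite mxE eqxx.
Qed.

Lemma mxrank_dual A : \rank (dual A) = (n - \rank A)%N.
Proof. by rewrite mxrank_ker mxrank_tr. Qed.

Lemma dualS A B : (A <= B)%MS -> (dual B <= dual A)%MS.
Proof. by case/submxP => M ->; apply/sub_kermxP; rewrite trmx_mul mulmxA mulmx_ker mul0mx. Qed.

Lemma dualK A : (dual (dual A) :=: A)%MS.
Proof.
have A_dualK : (A <= dual (dual A))%MS.
  by apply/sub_kermxP; rewrite -[A]trmxK -trmx_mul trmxK mulmx_ker trmx0.
apply/eqmxP; rewrite A_dualK andbT -(mxrank_leqif_sup A_dualK).
by rewrite !mxrank_dual subKn ?rank_leq_col.
Qed.

Lemma Supp_full D :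
  (forall i, ~~ ((delta_mx 0 i : 'rV_n) <= dual D)%MS) -> Supp D = setT.
Proof.
move=> no_unit; apply/setP => i; rewrite inE in_setT; apply: contraT.
rewrite negb_exists => /forallP Di; case/negP: (no_unit i).
rewrite sub_kermx -rowE -tr_col; apply/eqP/matrixP => ? r; rewrite !mxE.
by have := Di (row r D); rewrite row_sub mxE /= negbK => /eqP.
Qed.

End Codes.

Lemma mxrank_le_support (F : fieldType) m n (A : 'M[F]_(m, n)) (S : {set 'I_n}) :
  (forall i j, j \notin S -> A i j = 0) -> (\rank A <= #|S|)%N.
Proof.
move=> A0; rewrite -mxrank_tr.
have AS : (A^T <= \sum_(j in S) <<row j A^T>>)%MS.
  apply/row_subP => j; have [jS|jS] := boolP (j \in S).
    by apply: (sumsmx_sup j); rewrite ?genmxE.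
  suff -> : row j A^T = 0 by rewrite sub0mx.
  by apply/rowP => i; rewrite !mxE A0.
apply: leq_trans (mxrankS AS) _; apply: leq_trans (mxrank_sum_leqif _) _.
by rewrite -sum1_card; apply: leq_sum => j _; rewrite /= genmxE rank_leq_row.
Qed.

Lemma covering_dim_le_rank n (C D : 'M['F_2]_n) :
  (D <= C)%MS -> Supp D = setT ->
  exists2 g, covering_dim C = Some g & (g <= \rank D)%N.
Proof.
move=> DC SuppD.
have SuppC : Supp C = setT by apply/eqP; rewrite eqEsubset subsetT -SuppD SuppS.
rewrite /covering_dim SuppC eqxx /=; eexists; first reflexivity.
have [D0|rD_gt0] := posnP (\rank D).
  have n0 : n = 0%N.
    move/eqP: D0; rewrite mxrank_eq0 => /eqP D0.
    by rewrite -[n]card_ord -cardsT -SuppD D0 Supp0 cards0.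
  apply: (@leq_trans n); last by move: (leq0n (\rank D)); rewrite -{1}n0.
  apply: (big_ind (fun m => m <= n)%N) => // [a b a_le _|r _]; first by rewrite geq_min a_le.
  by rewrite -ltnS.
rewrite (bigD1 (Ordinal (rank_leq_col D : \rank D < n.+1)%N)) ?geq_minl //=.
by rewrite rD_gt0; apply/existsP; exists D; rewrite DC SuppD !eqxx.
Qed.

Section Covering.
Variables (n : nat) (C W : 'M['F_2]_n).
Hypotheses (WC_direct : mxdirect (W + dual C))
           (WC_no_unit : forall i, ~~ ((delta_mx 0 i : 'rV_n) <= W + dual C)%MS).

Lemma covering_dim_le_corank :
  exists2 g, covering_dim C = Some g & (g <= \rank C - \rank W)%N.
Proof.
set D := dual (W + dual C)%MS.
have DC : (D <= C)%MS.
  by apply: submx_trans (dualS (addsmxSr W (dual C))) _; rewrite dualK.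
have SuppD : Supp D = setT by apply: Supp_full => i; rewrite dualK.
have [g covg g_le] := covering_dim_le_rank DC SuppD.
exists g => //; move: g_le; rewrite mxrank_dual (mxdirectP WC_direct) /= mxrank_dual.
by rewrite subnDA subnAC subKn ?rank_leq_col.
Qed.

End Covering.

Definition light_free n (B W : 'M['F_2]_n) :=
  forall x y : 'rV_n, (x <= W)%MS -> (wt y <= 1)%N -> ((x + y)%R <= B)%MS ->
  x = 0 /\ y = 0.

Section LightFree.
Variables (n : nat) (B W : 'M['F_2]_n).
Hypothesis free : light_free B W.

Lemma light_free_direct : mxdirect (W + B).
Proof.
apply/mxdirect_addsP/eqP/rowV0P => x; rewrite sub_capmx => /andP [xW xB].
by case: (@free x 0 xW) => [||->]; rewrite ?wt0 ?addr0.
Qed.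

Lemma light_free_no_unit i : ~~ ((delta_mx 0 i : 'rV_n) <= W + B)%MS.
Proof.
apply/negP => /sub_addsmxP [u e_i].
have e_iB : ((u.1 *m W + delta_mx 0 i)%R <= B)%MS.
  by rewrite e_i addrA (eqP (_ : u.1 *m W + u.1 *m W == 0)) ?addmx_eq0_F2 ?add0r ?submxMl.
have [_ /eqP] := free (submxMl _ _) (eq_leq (wt_delta i)) e_iB.
by rewrite -wt_eq0 wt_delta.
Qed.

End LightFree.

Lemma light_free_of_weights n (B W : 'M['F_2]_n) (z : 'rV_n) d :
  (3 < d)%N -> (forall y, (y <= B)%MS -> y != 0 -> (d <= wt y)%N) -> (z <= B)%MS ->
  (forall x, (x <= W)%MS -> wt x != 1%N /\ ((wt x <= d - 2)%N \/ wt (x + z) = 2%N)) ->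
  light_free B W.
Proof.
move=> d_gt3 wtB zB wtW x y xW wy xyB.
have [wx_neq1 wx] := wtW x xW.
suff xy0 : x + y = 0.
  have yx : y = x by apply/esym/eqP; rewrite -addmx_eq0_F2 xy0.
  have x0 : x = 0 by apply/eqP; rewrite -wt_eq0; move: wy wx_neq1; rewrite yx; lia.
  by rewrite yx x0.
apply/eqP; apply: contraT => xy_neq0; have := wtB _ xyB xy_neq0.
case: wx => [wx_le | wxz].
  by rewrite leqNgt (leq_ltn_trans (wt_add x y)) //; lia.
have xzyB : ((x + z + y)%R <= B)%MS by rewrite addrAC addmx_sub.
have /eqP : x + z + y = 0.
  apply/eqP; apply: contraT => /(wtB _ xzyB).
  by rewrite leqNgt (leq_ltn_trans (wt_add (x + z) y)) // wxz; lia.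
by rewrite addmx_eq0_F2 => /eqP yxz; move: wy; rewrite -yxz wxz.
Qed.

(* The kernel of [check_mx P b c d] consists of the words x supported on P
   with x_b = x_c and wt x = d * x_c (mod 2): column j outside P checks x_j,
   column b checks x_b + x_c, column c checks the weight parity. *)
Definition check_mx n (P : {set 'I_n}) (b c : 'I_n) (d : nat) : 'M['F_2]_n :=
  \matrix_(i, j) (if j \notin P then (i == j)%:R
                  else if j == b then (i == b)%:R + (i == c)%:R
                  else if j == c then 1 + d%:R * (i == c)%:R else 0).

Section CheckMatrix.
Variables (n d : nat) (P : {set 'I_n}) (b c : 'I_n).
Hypotheses (bP : b \in P) (cP : c \in P) (bc : b != c) (cardP : #|P| = d).

Lemma rank_ker_check_mx : (d - 2 <= \rank (kermx (check_mx P b c d)))%N.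
Proof.
rewrite mxrank_ker.
have : (\rank (check_mx P b c d) <= #|~: P :|: [set b; c]|)%N.
  apply: mxrank_le_support => i j; rewrite !inE negb_or negbK => /andP [jP /norP [jb jc]].
  by rewrite mxE jP (negbTE jb) (negbTE jc).
have := cardsC P; have := (leq_card_setU (~: P) [set b; c]).1.
rewrite card_ord cardP cards2 bc /=; lia.
Qed.

Lemma ker_check_mx_constraints x : (x <= kermx (check_mx P b c d))%MS ->
  [/\ supp x \subset P, x 0 b = x 0 c & (wt x)%:R + d%:R * x 0 c = 0 :> 'F_2].
Proof.
move/sub_kermxP/rowP => xK.
have col j : \sum_i x 0 i * check_mx P b c d i j = 0 by move: (xK j); rewrite !mxE.
split.
- apply/subsetP => j; rewrite in_supp; apply: contraR => jP; move: (col j).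
  by under eq_bigr => i _ do rewrite mxE jP; rewrite sum_mul_delta => /eqP.
- move: (col b); under eq_bigr => i _ do rewrite mxE bP eqxx mulrDr.
  by rewrite big_split /= !sum_mul_delta => /eqP; rewrite addr_eq0 F2_oppr => /eqP.
- have cb : (c == b) = false by apply/negbTE; rewrite eq_sym.
  move: (col c); under eq_bigr => i _ do rewrite mxE cP cb eqxx mulrDr mulr1 mulrCA.
  by rewrite big_split /= sum_F2 -mulr_sumr sum_mul_delta.
Qed.

Lemma ker_check_mx_wt x : (x <= kermx (check_mx P b c d))%MS ->
  wt x != 1%N /\ ((wt x <= d - 2)%N \/ supp x = P).
Proof.
case/ker_check_mx_constraints => xP xbc parity.
have bc2 : #|[set b; c]| = 2%N by rewrite cards2 bc.
case: (F2_cases (x 0 c)) => xc; rewrite xc in parity.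
- move/eqP: parity; rewrite mulr0 addr0 F2_nat_eq0 => even.
  have : supp x \subset P :\: [set b; c].
    apply/subsetP => j jx; rewrite inE (subsetP xP) // andbT.
    by apply: contraTN jx; rewrite !inE => /orP [] /eqP ->; rewrite ?xbc xc eqxx.
  move/subset_leq_card; rewrite cardsDS ?bc2 ?cardP => [wt_le|]; last first.
    by apply/subsetP => j; rewrite !inE => /orP [] /eqP ->.
  by split; [apply: contraNneq even => -> | left].
- move/eqP: parity; rewrite mulr1 -natrD F2_nat_eq0 => even.
  have w2 : (2 <= wt x)%N.
    rewrite -bc2 subset_leq_card //; apply/subsetP => j.
    by rewrite !inE => /orP [] /eqP ->; rewrite ?xbc xc oner_eq0.
  have wd : (wt x <= d)%N by rewrite -cardP subset_leq_card.
  split; first by apply: contraTneq w2 => ->.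
  have [wd_eq|wd_neq] := eqVneq (wt x) d.
    by right; apply/eqP; rewrite eqEcard xP cardP -wd_eq /=.
  left; rewrite leqNgt; apply/negP => wgt.
  have d_eq : d = (wt x).+1 by lia.
  by rewrite d_eq addnS oddS addnn odd_double in even.
Qed.

End CheckMatrix.

Lemma exists_light_free n (B : 'M['F_2]_n) (z : 'rV_n) :
  (3 < min_wt B)%N -> (z <= B)%MS -> wt z = min_wt B -> supp z != setT ->
  exists2 W : 'M['F_2]_n, (min_wt B - 2 <= \rank W)%N & light_free B W.
Proof.
set d := min_wt B => d_gt3 zB wz; rewrite eqEsubset subsetT /= => /subsetPn [c _ cz].
set T := supp z in cz *; have cardT : #|T| = d by [].
have [t tT] : exists t, t \in T by apply/card_gt0P; rewrite cardT; lia.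
have [b bT] : exists b, b \in T :\ t.
  by apply/card_gt0P; move: cardT; rewrite (cardsD1 t) tT; lia.
set P := c |: (T :\ t).
have cardP : #|P| = d.
  by rewrite cardsU1 in_setD1 (negbTE cz) andbF; move: cardT; rewrite (cardsD1 t) tT.
have bP : b \in P by rewrite in_setU1 bT orbT.
have cP : c \in P by rewrite setU11.
have bc : b != c by apply: contraTneq bT => ->; rewrite in_setD1 (negbTE cz) andbF.
have tc : t != c by apply: contraTneq tT => ->.
exists (kermx (check_mx P b c d)); first exact: rank_ker_check_mx.
apply: (light_free_of_weights d_gt3 (@min_wt_le n B) zB) => x xW.
have [wx_neq1 [wx_le|suppP]] := ker_check_mx_wt bP cP bc cardP xW; split=> //; [by left|right].
rewrite /wt (_ : supp _ = [set t; c]) ?cards2 ?tc //; apply/setP => i.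
rewrite in_supp_add suppP in_set2 /P in_setU1 in_setD1 -/T.
have [->|it] := eqVneq i t; first by rewrite (negbTE tc) tT.
have [->|ic] := eqVneq i c; first by rewrite (negbTE cz).
by case: (i \in T).
Qed.

Theorem mainTheorem8 (n : nat) (C : 'M['F_2]_n) :
  dual C != 0%R ->
  (3 < min_wt (dual C) < \rank C + 1)%N ->
  exists g : nat, covering_dim C = Some g /\ (g <= \rank C - min_wt (dual C) + 2)%N.
Proof.
move=> dualC_neq0 /andP [d_gt3 d_le_k].
have [z [z_dual _] wz] := min_wt_attained dualC_neq0.
have k_lt_n : (\rank C < n)%N.
  by move: dualC_neq0; rewrite -mxrank_eq0 mxrank_dual -lt0n subn_gt0.
have supp_z : supp z != setT.
  apply/eqP => zT; have : wt z = n by rewrite /wt zT cardsT card_ord.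
  lia.
have [W rW free] := exists_light_free d_gt3 z_dual wz supp_z.
have [g covg g_le] :=
  covering_dim_le_corank (light_free_direct free) (light_free_no_unit free).
by exists g; split=> //; lia.
Qed.
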